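(* Let $i\geq1$ and let $m$ be an integer with $5\nmid m$ such that $m=N_i(f)$ for some $f\in\mathbb Z[x]$. Then $m=N_i(1+(x-1)^3h(x))$ for some $h\in\mathbb Z[x]$. For $i=1$, moreover, given such $h$, there is $g\in\mathbb Z[x]$ with $5m=N_1(1-x+5g(x))$, and $5\nmid g(1)$ if $5\nmid h(1)$.
   Context: For $k\geq1$, $\omega_k=e^{2\pi i/5^k}$ and $N_k(F)=\prod_{1\leq j\leq 5^k,\ 5\nmid j}F(\omega_k^j)$. *)

From HB Require Import structures.
From mathcomp Require Import all_boot all_order all_algebra all_field.
Set Implicit Arguments. Unset Strict Implicit. Unset Printing Implicit Defensive.
Import Order.TTheory GRing.Theory Num.Theory.
Local Open Scope ring_scope.

(* omega k = e^{2 pi i / 5^k}, realised in algC as the square of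
   (5^k).-root (-1) = e^{i pi / 5^k} (the n-th root with minimal
   non-negative argument). *)
Definition omega (k : nat) : algC := ((5 ^ k)%N.-root (-1)) ^+ 2.

Definition Nk (k : nat) (F : {poly int}) : algC :=
  \prod_(1 <= j < (5 ^ k).+1 | ~~ (5 %| j)%N)
     (map_poly (fun z : int => z%:~R) F).[omega k ^+ j].

(* Let z be a primitive n-th root of unity, n = 5^i, and N F = prod_(k coprime to n) F(z^k).
   Since Phi_n(X) = sum_(j < 5) X^(j n/5) = prod_(k coprime to n) (X - z^k), we get
   N (c - X) = Phi_n(c), so N (1 - X) = 5 and N (- X) = N (-1 - X) = 1, and
   5 = (1 - z)^phi(n) * u with u in Z[z]; as phi(n) >= 3, 5 lies in (z - 1)^3 Z[z].
   Hence 5 | N F whenever 5 | F(1), and N F = N (1 + (X - 1)^3 h) for some h whenever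
   F = 1 modulo J = ((X - 1)^3, 5).  If 5 does not divide m = N f, then f is a unit of
   Z[X]/J = F_5[t]/(t^3), whose unit group is generated by -X and -1 - X (a finite check),
   so f (-X)^p (-1 - X)^b = 1 mod J has norm m and yields h.  For n = 5,
   Phi_5(X) = t^4 + 5 (1 + 2t + 2t^2 + t^3) with t = X - 1, hence at z
   (1 - X) (1 + t^3 h) = 1 - X + 5 g for g = h (1 + 2t + 2t^2 + t^3), and g(1) = h(1). *)

From HB Require Import structures.
From mathcomp Require Import all_boot all_order all_algebra all_field.
From mathcomp Require Import ring zify.
Import Order.TTheory GRing.Theory Num.Theory.
Local Open Scope ring_scope.

Lemma sum_unity_root_eq0 [R : idomainType] [n] [w : R] :
  w ^+ n = 1 -> w != 1 -> \sum_(k < n) w ^+ k = 0.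
Proof.
move=> wn1 w_neq1; apply/eqP; move: (subrX1 w n).
by rewrite wn1 subrr => /esym/eqP; rewrite mulf_eq0 subr_eq0 (negbTE w_neq1).
Qed.

Lemma big_nat_mul_dvdn (R : Type) (idx : R) (op : Monoid.law idx) d q (F : nat -> R) :
  (0 < d)%N ->
  \big[op/idx]_(0 <= k < d * q | (d %| k)%N) F k = \big[op/idx]_(0 <= l < q) F (d * l)%N.
Proof.
move=> d_gt0; elim: q => [|q IHq]; first by rewrite muln0 !big_geq.
rewrite big_nat_recr //= -IHq mulnS addnC (@big_cat_nat _ _ _ (d * q)) ?leq_addr //=.
congr (op _ _); rewrite big_ltn_cond; last by lia.
rewrite (dvdn_mulr _ (dvdnn d)) big_nat_cond big1 ?Monoid.mulm1 // => k /andP[/andP[lo hi]].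
rewrite -(subnKC (ltnW lo)) dvdn_addr ?dvdn_mulr // => /dvdn_leq.
by rewrite subn_gt0 lo => /(_ isT); lia.
Qed.

Lemma cyclotomic_prime_power (R : fieldType) p e (z : R) :
  prime p -> (p ^ e.+1).-primitive_root z ->
  cyclotomic z (p ^ e.+1) = \sum_(j < p) 'X^(p ^ e * j).
Proof.
move=> p_prime z_prim; have p_gt0 := prime_gt0 p_prime.
have zp_prim : (p ^ e).-primitive_root (z ^+ p).
  by have := dvdn_prim_root z_prim (dvdn_exp2l p (leqnSn e)); rewrite expnS mulnK // expn_gt0 p_gt0.
rewrite expnS in z_prim *; set q := (p ^ e)%N in zp_prim *.
have Xq1_neq0 : 'X^q - 1 != 0 :> {poly R}.
  by rewrite -size_poly_eq0 size_XnsubC // expn_gt0 p_gt0.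
apply: (mulfI Xq1_neq0).
rewrite (eq_bigr (fun j : 'I_p => 'X^q ^+ j)) => [|j _]; last by rewrite exprM.
rewrite -subrX1 -exprM [(q * p)%N]mulnC.
transitivity (\prod_(0 <= k < p * q) ('X - (z ^+ k)%:P)); last exact: factor_Xn_sub_1.
rewrite (bigID (fun k => (p %| k)%N)) /=; congr (_ * _).
  rewrite big_nat_mul_dvdn // -(factor_Xn_sub_1 zp_prim).
  by apply: eq_bigr => l _; rewrite exprM.
have coprime_pq k : coprime k (p * q) = ~~ (p %| k)%N.
  by rewrite -expnS coprime_pexpr // coprime_sym prime_coprime.
by rewrite /cyclotomic big_mkord; apply: eq_bigl => k; rewrite coprime_pq.
Qed.

Lemma card_coprime_ord n : #|[pred k : 'I_n | coprime k n]| = totient n.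
Proof.
rewrite totient_count_coprime big_mkord -sum1_card big_mkcond /=.
by apply: eq_bigr => k _; rewrite inE coprime_sym; case: coprime.
Qed.

Lemma cyclotomic_horner1 (R : comNzRingType) (z : R) n :
  (cyclotomic z n).[1] =
  (1 - z) ^+ totient n * \prod_(k < n | coprime k n) \sum_(j < k) z ^+ j.
Proof.
rewrite /cyclotomic horner_prod -card_coprime_ord -prodr_const -big_split /=.
apply: eq_bigr => k _; rewrite hornerXsubC.
by rewrite -opprB subrX1 -mulNr opprB.
Qed.

Lemma poly_expand1 [R : comNzRingType] (p : {poly R}) (a : R) :
  exists q, p = p.[a]%:P + ('X - a%:P) * q.
Proof.
have : root (p - p.[a]%:P) a by rewrite rootE hornerD hornerN hornerC subrr.
by case/factor_theorem => q pq; exists q; rewrite mulrC -pq addrC subrK.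
Qed.

(** * Roots of unity in algC *)

Lemma oner_neqN1 (R : numDomainType) : (1 : R) != -1.
Proof. by rewrite eq_sym lt_eqF // (lt_trans (ltrN10 _) ltr01). Qed.

Lemma norm_eq1_expr [n] [w : algC] : (0 < n)%N -> `|w ^+ n| = 1 -> `|w| = 1.
Proof. by move=> n_gt0 wn1; apply/eqP; rewrite -(pexpr_eq1 n_gt0) // -normrX wn1. Qed.

Lemma norm_prim_root [n] [w : algC] : n.-primitive_root w -> `|w| = 1.
Proof.
move=> w_prim; apply: (norm_eq1_expr (prim_order_gt0 w_prim)).
by rewrite (prim_expr_order w_prim) normr1.
Qed.

Lemma mul_conjC_norm1 [y : algC] : `|y| = 1 -> y * y^* = 1.
Proof. by move=> y1; rewrite -normCK y1 expr1n. Qed.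

Lemma real_addC_conj (y : algC) : y + y^* \is Num.real.
Proof. by rewrite CrealE rmorphD /= conjCK addrC. Qed.

Lemma sqr_normD1_circle [y : algC] : `|y| = 1 -> `|y + 1| ^+ 2 = y + y^* + 2.
Proof.
move=> y1; rewrite normCK rmorphD rmorph1 /=.
by have yy := mul_conjC_norm1 y1; ring: yy.
Qed.

Lemma sqr_normB1_circle [y : algC] : `|y| = 1 -> `|y - 1| ^+ 2 = 2 - (y + y^*).
Proof.
move=> y1; rewrite normCK rmorphB rmorph1 /=.
by have yy := mul_conjC_norm1 y1; ring: yy.
Qed.

Lemma dickson5 [R : comRingType] [y c : R] : y * c = 1 ->
  y ^+ 5 + c ^+ 5 = (y + c) ^+ 5 - 5 * (y + c) ^+ 3 + 5 * (y + c).
Proof. by move=> yc1; ring: yc1. Qed.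

Lemma exists_rotation_addC_conj_gt1 [s eta : algC] :
  `|s| = 1 -> 5.-primitive_root eta ->
  exists k : nat, 1 < s * eta ^+ k + (s * eta ^+ k)^*.
Proof.
move=> s1 eta_prim; pose Y k := s * eta ^+ k; pose u k := Y k + (Y k)^*.
have Y1 k : `|Y k| = 1 by rewrite normrM normrX s1 (norm_prim_root eta_prim) expr1n mulr1.
have psum j : (0 < j < 5)%N -> \sum_(k < 5) Y k ^+ j = 0.
  move=> j_bd; rewrite (eq_bigr (fun k : 'I_5 => s ^+ j * (eta ^+ j) ^+ k)); last first.
    by move=> k _; rewrite exprMn exprAC.
  rewrite -mulr_sumr sum_unity_root_eq0 ?mulr0 //.
    by rewrite exprAC (prim_expr_order eta_prim) expr1n.
  by rewrite -(prim_order_dvd eta_prim); apply/negP => /dvdn_leq; lia.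
have psumC j : (0 < j < 5)%N -> \sum_(k < 5) (Y k)^* ^+ j = 0.
  move=> j_bd; rewrite (eq_bigr (fun k : 'I_5 => (Y k ^+ j)^*)) => [|k _]; last by rewrite rmorphXn.
  by rewrite -rmorph_sum psum // rmorph0.
(* [P u = u^2 (u + 2) (u - 1)] is [<= 0] on [[-2, 1]] but sums to [10] over the five rotations. *)
have P_sum : \sum_(k < 5) u k ^+ 2 * (u k + 2) * (u k - 1) = 10.
  have P_expand k : u k ^+ 2 * (u k + 2) * (u k - 1) =
      Y k ^+ 4 + (Y k)^* ^+ 4 + (Y k ^+ 3 + (Y k)^* ^+ 3)
      + 2 * (Y k ^+ 2 + (Y k)^* ^+ 2) + 3 * (Y k + (Y k)^*) + 2.
    by have YY := mul_conjC_norm1 (Y1 k); rewrite /u; ring: YY.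
  under eq_bigr => k _ do rewrite P_expand.
  rewrite !big_split -!mulr_sumr !big_split /= (psum 1) ?(psumC 1) ?psum ?psumC //.
  by rewrite sumr_const card_ord !(mulr0, addr0, add0r) -natrD.
have [k u_gt1 | u_le1] := pickP [pred k : 'I_5 | 1 < u k]; first by exists k.
suff : 10 <= 0 :> algC by rewrite lern0.
rewrite -P_sum; apply: sumr_le0 => k _.
have u_real := real_addC_conj (Y k).
apply: mulr_ge0_le0; last by rewrite subr_le0 (real_leNgt u_real) ?rpred1 //; apply/negbT/u_le1.
by rewrite mulr_ge0 // -?realEsqr // /u -(sqr_normD1_circle (Y1 k)) exprn_ge0.
Qed.

(* n.-root (-1) has the largest real part among the n-th roots of -1 with nonnegative
   imaginary part.  If r := (5q).-root (-1) satisfied r^q = -1, a fifth root y of r with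
   1 < y + y^* would be another one with larger real part, by Dickson's formula for y^5. *)
Lemma rootCN1_expr_neqN1 q : (0 < q)%N -> ((5 * q)%N.-root (-1 : algC)) ^+ q != -1.
Proof.
set n := (5 * q)%N; set r := n.-root (-1) => q_gt0; apply/eqP => rqN1.
have n_gt0 : (0 < n)%N by rewrite muln_gt0.
have r1 : `|r| = 1 by apply: (norm_eq1_expr n_gt0); rewrite rootCK // normrN1.
have [eta eta_prim] := C_prim_root_exists (isT : (0 < 5)%N).
have s5 : (5.-root r) ^+ 5 = r by apply: rootCK.
have s1 : `|5.-root r| = 1 by apply: (norm_eq1_expr (isT : (0 < 5)%N)); rewrite s5.
have [k] := exists_rotation_addC_conj_gt1 s1 eta_prim.
set y := _ * _; set u := y + _ => u_gt1.
have y1 : `|y| = 1 by rewrite normrM normrX s1 (norm_prim_root eta_prim) expr1n mulr1.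
have y5 : y ^+ 5 = r by rewrite exprMn s5 exprAC (prim_expr_order eta_prim) expr1n mulr1.
have yn : y ^+ n = -1 by rewrite exprM y5 rqN1.
have u_lt2 : u < 2.
  rewrite -subr_gt0 -(sqr_normB1_circle y1) exprn_gt0 // normr_gt0 subr_eq0.
  apply: contra_eqN rqN1 => /eqP y_eq1.
  by rewrite -y5 y_eq1 !expr1n oner_neqN1.
have Re_r_lt_Re_y : 'Re r < 'Re y.
  rewrite !ReE -y5 rmorphXn (dickson5 (mul_conjC_norm1 y1)) ltr_pM2r ?invr_gt0 ?ltr0n //.
  rewrite -/u -subr_lt0 (_ : _ - _ = u * (u ^+ 2 - 1) * (u ^+ 2 - 2 ^+ 2)); last by ring.
  have u_gt0 : 0 < u := lt_trans ltr01 u_gt1.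
  rewrite pmulr_rlt0 ?mulr_gt0 ?subr_lt0 ?subr_gt0 ?exprn_egt1 //.
  by rewrite ltr_pXn2r // qualifE /= ltW.
have [y' y'n [Im_y' Re_y']] : exists2 y', y' ^+ n = -1 & 0 <= 'Im y' /\ 'Re y' = 'Re y.
  have [Im_y | Im_y_lt0] := boolP (0 <= 'Im y); first by exists y.
  exists y^*; first by rewrite -rmorphXn yn rmorphN1.
  by rewrite Im_conj oppr_ge0 Re_conj ltW // real_ltNge ?Creal_Im.
have := rootC_Re_max n_gt0 y'n Im_y'; rewrite Re_y'.
by move=> /(lt_le_trans Re_r_lt_Re_y); rewrite ltxx.
Qed.

Lemma omega_prim [i] : (0 < i)%N -> (5 ^ i).-primitive_root (omega i).
Proof.
case: i => // i _; rewrite /omega.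
set r := (5 ^ i.+1)%N.-root (-1).
have n_gt0 : (0 < 5 ^ i.+1)%N by rewrite expn_gt0.
have rn : r ^+ (5 ^ i.+1) = -1 := rootCK n_gt0 (-1).
have r2n : (r ^+ 2) ^+ (5 ^ i.+1) = 1 by rewrite exprAC rn sqrrN expr1n.
have [d d_prim /(dvdn_pfactor _ _ (isT : prime 5))[e]] := prim_order_exists n_gt0 r2n.
rewrite leq_eqVlt ltnS => /orP[/eqP-> d_eq | e_le_i d_eq]; first by rewrite -d_eq.
have : (r ^+ (5 ^ i)) ^+ 2 = 1.
  by rewrite -exprM mulnC exprM; apply/eqP; rewrite -(prim_order_dvd d_prim) d_eq dvdn_exp2l.
move/eqP; rewrite sqrf_eq1 => /orP[/eqP ri1 | /eqP riN1].
  by move: rn; rewrite expnS mulnC exprM ri1 expr1n => /eqP; rewrite (negbTE (oner_neqN1 _)).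
by move: (rootCN1_expr_neqN1 (5 ^ i)); rewrite expn_gt0 -expnS -/r riN1 eqxx => /(_ isT).
Qed.

(** * The norm N_k *)

Definition ev (z : algC) (F : {poly int}) : algC := (map_poly intr F).[z].
HB.instance Definition _ z :=
  GRing.RMorphism.copy (ev z) (horner_eval z \o map_poly intr).

Lemma evX z : ev z 'X = z.
Proof. by rewrite /ev map_polyX hornerX. Qed.

Lemma evC z c : ev z c%:P = c%:~R.
Proof. by rewrite /ev map_polyC hornerC. Qed.

Lemma ev_Aint n z F : (0 < n)%N -> z ^+ n = 1 -> ev z F \in Aint.
Proof.
move=> n_gt0 zn1; rewrite /ev horner_coef; apply: rpred_sum => i _.
rewrite coef_map /=; apply: rpredM; first exact: Aint_int.
by apply/rpredX/(Aint_unity_root n_gt0)/unity_rootP.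
Qed.

Definition cycnorm n z F := \prod_(k < n | coprime k n) ev (z ^+ k) F.

Lemma cycnormM n z F G : cycnorm n z (F * G) = cycnorm n z F * cycnorm n z G.
Proof. by rewrite -big_split; apply: eq_bigr => k _; rewrite rmorphM. Qed.

Lemma cycnormXn n z F k : cycnorm n z (F ^+ k) = cycnorm n z F ^+ k.
Proof. by rewrite -prodrXl; apply: eq_bigr => j _; rewrite rmorphXn. Qed.

Lemma eq_cycnorm n z F G : n.-primitive_root z ->
    (forall w, n.-primitive_root w -> ev w F = ev w G) ->
  cycnorm n z F = cycnorm n z G.
Proof.
by move=> z_prim evFG; apply: eq_bigr => k k_coprime; rewrite evFG ?prim_root_exp_coprime.
Qed.

Lemma cycnorm_CsubX n z (c : int) :
  cycnorm n z (c%:P - 'X) = (cyclotomic z n).[c%:~R].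
Proof.
rewrite /cyclotomic horner_prod; apply: eq_bigr => k _.
by rewrite rmorphB /= evC evX hornerXsubC.
Qed.

Lemma cycnorm_Aint n z F : n.-primitive_root z -> cycnorm n z F \in Aint.
Proof.
move=> z_prim; apply: rpred_prod => k _; apply: (@ev_Aint n _ _ (prim_order_gt0 z_prim)).
by rewrite exprAC (prim_expr_order z_prim) expr1n.
Qed.

Lemma Nk_cycnorm i F : (0 < i)%N -> Nk i F = cycnorm (5 ^ i) (omega i) F.
Proof.
move=> i_gt0; have n_dvd : (5 %| 5 ^ i)%N by rewrite dvdn_exp.
have n_gt0 : (0 < 5 ^ i)%N by rewrite expn_gt0.
rewrite /cycnorm -(big_mkord (coprime^~ (5 ^ i)%N) (fun k => ev (omega i ^+ k) F)).
rewrite /Nk (big_nat_widenl _ 0) // [RHS](big_nat_widen _ _ _ _ _ (leqnSn _)).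
rewrite big_nat_cond [RHS]big_nat_cond; apply: eq_bigl => j.
rewrite coprime_pexpr // coprime_sym prime_coprime //.
by case: (boolP (5 %| j)%N) => [|j_ndvd] /=; rewrite ?andbF //; lia.
Qed.

(** * Residues modulo J = ((X - 1)^3, 5) *)

Local Notation t := ('X - 1 : {poly int}).

Definition inJ (P : {poly int}) := exists Q R : {poly int}, P = t ^+ 3 * Q + 5 * R.

Lemma inJD P P' : inJ P -> inJ P' -> inJ (P + P').
Proof. by move=> [Q [R ->]] [Q' [R' ->]]; exists (Q + Q'), (R + R'); ring. Qed.

Lemma inJMr P G : inJ P -> inJ (P * G).
Proof. by move=> [Q [R ->]]; exists (Q * G), (R * G); ring. Qed.

(* A triple (a0, a1, a2) stands for a0 + a1 t + a2 t^2 in Z[X]/J = F_5[t]/(t^3); mul3 is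
   the product there, with coefficients reduced to [0, 5) so that it can be computed. *)
Definition lift3 (a : int * int * int) : {poly int} :=
  let: (a0, a1, a2) := a in a0%:P + a1%:P * t + a2%:P * t ^+ 2.

Definition mod5_3 (a : int * int * int) : int * int * int :=
  let: (a0, a1, a2) := a in (a0 %% 5, a1 %% 5, a2 %% 5)%Z.

Definition mul3 (a b : int * int * int) : int * int * int :=
  let: (a0, a1, a2) := a in let: (b0, b1, b2) := b in
  mod5_3 (a0 * b0, a0 * b1 + a1 * b0, a0 * b2 + a1 * b1 + a2 * b0).

Definition exp3 a k := iter k (mul3 a) (1, 0, 0).

Definition congJ F a := inJ (F - lift3 a).

Lemma congJ_mod5 [F a] : congJ F a -> congJ F (mod5_3 a).
Proof.
case: a => [[a0 a1] a2] Fa; rewrite /congJ -[F](subrK (lift3 (a0, a1, a2))) -addrA.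
apply: inJD Fa _; exists 0, ((a0 %/ 5)%Z%:P + (a1 %/ 5)%Z%:P * t + (a2 %/ 5)%Z%:P * t ^+ 2).
rewrite /= {1}(divz_eq a0 5) {1}(divz_eq a1 5) {1}(divz_eq a2 5) !polyCD !polyCM polyC_natr.
ring.
Qed.

Lemma congJ_mul [F G a b] : congJ F a -> congJ G b -> congJ (F * G) (mul3 a b).
Proof.
case: a => [[a0 a1] a2]; case: b => [[b0 b1] b2] Fa Gb; apply: congJ_mod5; rewrite /congJ.
have -> : F * G - lift3 (a0 * b0, a0 * b1 + a1 * b0, a0 * b2 + a1 * b1 + a2 * b0) =
  (F - lift3 (a0, a1, a2)) * G + (G - lift3 (b0, b1, b2)) * lift3 (a0, a1, a2)
  + t ^+ 3 * ((a1 * b2 + a2 * b1)%:P + (a2 * b2)%:P * t).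
  by rewrite /= !polyCD !polyCM; ring.
apply: inJD; first by apply: inJD; apply: inJMr.
by exists ((a1 * b2 + a2 * b1)%:P + (a2 * b2)%:P * t), 0; ring.
Qed.

Lemma congJ_exp [F a] k : congJ F a -> congJ (F ^+ k) (exp3 a k).
Proof.
move=> Fa; elim: k => [|k IHk]; last by rewrite exprS; apply: congJ_mul.
by exists 0, 0; rewrite /= polyC1 polyC0 expr0; ring.
Qed.

Definition digits5 : seq int := [:: 0; 1; 2; 3; 4].

Lemma mod5_digits5 (c : int) : (c %% 5)%Z \in digits5.
Proof.
have : (0 <= c %% 5 < 5)%Z by rewrite modz_ge0 ?ltz_pmod.
by case: (c %% 5)%Z => [[|[|[|[|[|k]]]]]|k].
Qed.

Lemma units_mod_J_generated :
  all (fun a0 => (a0 == 0) || all (fun a1 => all (fun a2 =>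
    has (fun p => has (fun b =>
      mul3 (mul3 (a0, a1, a2) (exp3 (-1, -1, 0) p)) (exp3 (-2, -1, 0) b) == (1, 0, 0))
    (iota 0 20)) (iota 0 10)) digits5) digits5) digits5.
Proof. by vm_compute. Qed.

Lemma unit_modJ_normal_form [f] : ~~ (5 %| f.[1])%Z ->
  exists p b, inJ (f * (- 'X) ^+ p * (-1 - 'X) ^+ b - 1).
Proof.
move=> f1_ndvd; have [g1 e1] := poly_expand1 f 1.
have [g2 e2] := poly_expand1 g1 1; have [g3 e3] := poly_expand1 g2 1.
have f_cong : congJ f ((f.[1] %% 5)%Z, (g1.[1] %% 5)%Z, (g2.[1] %% 5)%Z).
  apply: (@congJ_mod5 _ (f.[1], g1.[1], g2.[1])).
  by exists g3, 0; rewrite /= {1}e1 {1}e2 {1}e3 polyC1; ring.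
have oppX_cong : congJ (- 'X) (-1, -1, 0) by exists 0, 0; rewrite /= polyC0 !polyCN polyC1; ring.
have N1subX_cong : congJ (-1 - 'X) (-2, -1, 0).
  by exists 0, 0; rewrite /= polyC0 !polyCN polyC1 -polyC_natr; ring.
have f10 : (f.[1] %% 5)%Z != 0 by apply: contra f1_ndvd => /eqP/dvdz_mod0P.
move/allP/(_ _ (mod5_digits5 f.[1])): units_mod_J_generated; rewrite (negbTE f10) orFb.
move/allP/(_ _ (mod5_digits5 g1.[1]))/allP/(_ _ (mod5_digits5 g2.[1])).
case/hasP => p _ /hasP[b _ /eqP pb]; exists p, b.
have := congJ_mul (congJ_mul f_cong (congJ_exp p oppX_cong)) (congJ_exp b N1subX_cong).
by rewrite pb /congJ /lift3 polyC1 polyC0 !mul0r !addr0.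
Qed.

Section FivePowerNorm.

Context {e : nat} {z : algC}.
Hypothesis z_prim : (5 ^ e.+1).-primitive_root z.
Local Notation n := (5 ^ e.+1)%N.
Local Notation N := (cycnorm n z).

Lemma cyclotomic5_horner (w : algC) (c : int) : n.-primitive_root w ->
  (cyclotomic w n).[c%:~R] = \sum_(j < 5) c%:~R ^+ (5 ^ e * j).
Proof.
move=> w_prim; rewrite cyclotomic_prime_power // horner_sum.
by apply: eq_bigr => j _; rewrite hornerXn.
Qed.

Lemma cyclotomic5_horner1 [w : algC] : n.-primitive_root w -> (cyclotomic w n).[1] = 5.
Proof.
move=> w_prim; rewrite -[1]mulr1z cyclotomic5_horner // mulr1z.
by under eq_bigr do rewrite expr1n; rewrite sumr_const card_ord.
Qed.

Lemma cycnorm_1subX : N (1 - 'X) = 5.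
Proof. by rewrite -polyC1 (cycnorm_CsubX _ _ 1) mulr1z cyclotomic5_horner1. Qed.

Lemma cycnorm_oppX : N (- 'X) = 1.
Proof.
rewrite -[- 'X]add0r -polyC0 (cycnorm_CsubX _ _ 0) cyclotomic5_horner // mulr0z.
rewrite big_ord_recl muln0 expr0 big1 ?addr0 // => j _.
by rewrite expr0n muln_eq0 expn_eq0 /=.
Qed.

Lemma cycnorm_N1subX : N (-1 - 'X) = 1.
Proof.
rewrite -polyC1 -polyCN (cycnorm_CsubX _ _ (-1)) cyclotomic5_horner // mulrN1z.
have odd_q : odd (5 ^ e) by rewrite oddX orbT.
under eq_bigr do rewrite exprM -signr_odd odd_q expr1.
by rewrite !big_ord_recr big_ord0 /=; ring.
Qed.
Lemma five_factor_cube :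
  exists T : {poly int}, forall w, n.-primitive_root w -> 5 = (w - 1) ^+ 3 * ev w T.
Proof.
have phi_ge3 : (3 <= totient n)%N.
  have q_gt0 : (0 < 5 ^ e)%N by rewrite expn_gt0.
  by rewrite totient_pfactor //=; lia.
exists (- (1 - 'X) ^+ (totient n - 3) * \prod_(k < n | coprime k n) \sum_(j < k) 'X ^+ j).
move=> w w_prim; rewrite -(cyclotomic5_horner1 w_prim) cyclotomic_horner1 -(subnKC phi_ge3).
rewrite rmorphM rmorphN rmorphXn rmorphB rmorph1 /= evX rmorph_prod /= addKn exprD.
under [in RHS]eq_bigr do rewrite rmorph_sum.
under [in RHS]eq_bigr do under eq_bigr do rewrite rmorphXn /= evX.
by set a := (1 - w) ^+ (totient n - 3); set P := \prod_(_ < n | _) _; ring.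
Qed.

Lemma cycnorm_dvd5 F m : N F = m%:~R -> (5 %| F.[1])%Z -> (5 %| m)%Z.
Proof.
move=> NF /dvdzP[c F1]; have [G FG] := poly_expand1 F 1.
have [T fiveT] := five_factor_cube.
pose H := - (c%:P * t ^+ 2 * T + G).
have NF5 : N F = 5 * N H.
  rewrite -cycnorm_1subX -cycnormM; apply: eq_cycnorm => // w w_prim.
  have F1C : F.[1]%:P = 5 * c%:P by rewrite F1 polyCM mulrC polyC_natr.
  rewrite {1}FG F1C polyC1 !(rmorph_nat, rmorphB, rmorphD, rmorphN, rmorphXn, rmorphM, rmorph1) /=.
  by rewrite !evC !evX {1}(fiveT w w_prim); ring.
have NH_int : N H \is a Num.int.
  apply: Cint_rat_Aint; last exact: cycnorm_Aint.
  have -> : N H = m%:~R / 5 by rewrite -NF NF5 [5 * _]mulrC mulfK ?pnatr_eq0.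
  by rewrite rpred_div ?rpred_int ?rpred_nat.
have /intrP[k NH] := NH_int.
by apply/dvdzP; exists k; apply: (@intr_inj algC); rewrite -NF NF5 NH rmorphM /= mulrC.
Qed.

Lemma cycnorm_eq1_modJ F : inJ (F - 1) -> exists h, N F = N (1 + t ^+ 3 * h).
Proof.
case=> Q [R FQR]; have [T fiveT] := five_factor_cube.
exists (Q + T * R); apply: eq_cycnorm => // w w_prim.
rewrite -[F](subrK 1) FQR !(rmorph_nat, rmorphB, rmorphD, rmorphXn, rmorphM, rmorph1) /= evX.
by rewrite {1}(fiveT w w_prim); ring.
Qed.

Lemma cycnorm_normal_form [f m] : ~~ (5 %| m)%Z -> N f = m%:~R ->
  exists h, N (1 + ('X - 1) ^+ 3 * h) = m%:~R.
Proof.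
move=> m_ndvd Nf; have f1_ndvd : ~~ (5 %| f.[1])%Z.
  by apply: contra m_ndvd; apply: cycnorm_dvd5.
have [p [b /cycnorm_eq1_modJ[h Nh]]] := unit_modJ_normal_form f1_ndvd.
by exists h; rewrite -Nh !cycnormM !cycnormXn cycnorm_oppX cycnorm_N1subX !expr1n !mulr1.
Qed.

End FivePowerNorm.

Lemma cycnorm5_normal_form_1subX [z h m] : 5.-primitive_root z ->
    cycnorm 5 z (1 + ('X - 1) ^+ 3 * h) = m%:~R ->
  exists g, cycnorm 5 z (1 - 'X + 5%:P * g) = (5 * m)%:~R /\
            (~~ (5 %| h.[1])%Z -> ~~ (5 %| g.[1])%Z).
Proof.
move=> z_prim Nh; exists (h * (1 + 2 * t + 2 * t ^+ 2 + t ^+ 3)); split; last first.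
  by rewrite hornerM !hornerE.
have N1subX : cycnorm 5 z (1 - 'X) = 5 by apply: (@cycnorm_1subX 0).
rewrite rmorphM /= mulrz_nat -Nh -N1subX -cycnormM; apply: eq_cycnorm => // w w_prim.
have w_neq1 : w != 1 by rewrite -[w]expr1 -(prim_order_dvd w_prim 1).
have := sum_unity_root_eq0 (prim_expr_order w_prim) w_neq1.
rewrite !big_ord_recr big_ord0 /= add0r expr0 expr1 => Phi5w.
rewrite polyC_natr !(rmorph_nat, rmorphB, rmorphD, rmorphXn, rmorphM, rmorph1) /= evX.
(* The difference is h(w) Phi_5(w), as t^4 + 5 (1 + 2t + 2t^2 + t^3) = Phi_5(X). *)
apply/eqP; rewrite -subr_eq0; apply/eqP.
transitivity (ev w h * (1 + w + w ^+ 2 + w ^+ 3 + w ^+ 4)); first by ring.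
by rewrite Phi5w mulr0.
Qed.

Theorem lemma3p2 (i : nat) (m : int) :
  (1 <= i)%N -> ~~ (5 %| m)%Z ->
  (exists f : {poly int}, Nk i f = m%:~R) ->
  (exists h : {poly int}, Nk i (1 + ('X - 1) ^+ 3 * h) = m%:~R) /\
  (i = 1%N -> forall h : {poly int}, Nk 1 (1 + ('X - 1) ^+ 3 * h) = m%:~R ->
     exists g : {poly int},
       Nk 1 (1 - 'X + 5%:P * g) = (5 * m)%:~R /\
       (~~ (5 %| h.[1])%Z -> ~~ (5 %| g.[1])%Z)).
Proof.
move=> i_gt0 m_ndvd [f Nf]; split.
  case: i i_gt0 Nf => // e _; rewrite Nk_cycnorm //.
  move/(cycnorm_normal_form (omega_prim (ltn0Sn e)) m_ndvd) => [h Nh].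
  by exists h; rewrite Nk_cycnorm.
move=> _ h; rewrite Nk_cycnorm // expn1.
move/(cycnorm5_normal_form_1subX (omega_prim (ltn0Sn 0))) => [g Ng].
by exists g; rewrite Nk_cycnorm // expn1.
Qed.
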